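(* Let $s>0$ and let $c$ be a constant. Suppose $g\in C^1[s,\infty)$ satisfies $$g'(t)=-g(t)\Big(1+\frac1t\Big)+\frac1t\int_s^t g(\xi)\,d\xi+\frac ct,\qquad t\in[s,\infty).$$ Then for all $t\ge s$, $$g(t)=g'(s)\,s^2\,e^{s}\,I_2(t,s)+g(s),$$ where $g'(s)=c\,s^{-1}-(1+s^{-1})\,g(s)$.
   Context: $I_2(t,s)=\int_s^t \frac{e^{-\xi}}{\xi^2}\,d\xi$. *)

From Stdlib Require Import Reals.
From Coquelicot Require Import Coquelicot.
Open Scope R_scope.

Definition I2 (t s : R) : R := RInt (fun xi => exp (- xi) / xi ^ 2) s t.

Definition C1_on_from (s : R) (g dg : R -> R) : Prop :=
  (forall t, s < t -> is_derive g t (dg t)) /\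
  filterlim (fun h => (g (s + h) - g s) / h) (at_right 0) (locally (dg s)) /\
  (forall t, s < t -> continuous dg t) /\
  filterlim dg (at_right s) (locally (dg s)).

From Stdlib Require Import Reals Lra.
From Coquelicot Require Import Coquelicot.
Open Scope R_scope.

(* Put h(t) := t g'(t) = -(t + 1) g(t) + \int_s^t g + c.  Differentiating,
   h' = -(t + 1) g' = -(1 + 1/t) h, so t e^t h(t) = t^2 e^t g'(t) is constant
   on [s, oo); hence g'(t) = g'(s) s^2 e^s e^(-t) / t^2 and the formula follows
   by integrating g'.  Since g is only right-differentiable at s, the argument
   is run on the extension t |-> g (max s t), which is continuous on all of R. *)

Lemma is_derive_0_const (f : R -> R) (a b : R) :
  a <= b ->
  (forall x, a < x < b -> is_derive f x 0) ->
  (forall x, a <= x <= b -> continuous f x) ->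
  f b = f a.
Proof.
  intros hab hd hc.
  destruct (MVT_gen f a b (fun _ => 0)) as [x [_ hx]].
  - intros x. rewrite Rmin_left, Rmax_right by lra. apply hd.
  - intros x. rewrite Rmin_left, Rmax_right by lra.
    intros hx. apply continuity_pt_filterlim, hc, hx.
  - lra.
Qed.

Lemma is_derive_RInt_from (f : R -> R) (lo a x : R) :
  (forall z, lo < z -> continuous f z) -> lo < a -> lo < x ->
  is_derive (fun b => RInt f a b) x (f x).
Proof.
  intros hf ha hx. apply (is_derive_RInt f _ a); [| now apply hf].
  apply locally_interval with lo p_infty; [exact hx | exact I |].
  intros b hb _. apply (RInt_correct (V := R_CompleteNormedModule)), ex_RInt_continuous.
  intros z hz. apply hf. pose proof (Rmin_glb_lt a b lo ha hb). lra.
Qed.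

Lemma is_derive_integrating_factor (h : R -> R) (x : R) :
  x <> 0 -> is_derive h x (- (1 + / x) * h x) ->
  is_derive (fun y => y * exp y * h y) x 0.
Proof.
  intros hx hd. auto_derive; [now exists (- (1 + / x) * h x) |].
  replace (Derive (fun y => h y) x) with (- (1 + / x) * h x)
    by (symmetry; now apply is_derive_unique).
  field. exact hx.
Qed.

Lemma right_continuous_of_right_derivative (g : R -> R) (s d : R) :
  filterlim (fun h => (g (s + h) - g s) / h) (at_right 0) (locally d) ->
  filterlim (fun h => g (s + h)) (at_right 0) (locally (g s)).
Proof.
  intros hq.
  apply filterlim_ext_loc with (fun h => g s + h * ((g (s + h) - g s) / h)).
  { exists (mkposreal 1 Rlt_0_1). intros h _ h_pos. field. lra. }
  replace (locally (g s)) with (locally (g s + 0 * d)) by (f_equal; ring).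
  eapply (filterlim_comp_2 (fun _ => g s) (fun h => h * ((g (s + h) - g s) / h)) Rplus).
  - apply filterlim_const.
  - eapply (filterlim_comp_2 (fun h => h) (fun h => (g (s + h) - g s) / h) Rmult).
    + apply (filterlim_filter_le_1 (F := locally 0)); [apply filter_le_within | apply filterlim_id].
    + exact hq.
    + exact (filterlim_mult 0 d).
  - exact (filterlim_plus (g s) (0 * d)).
Qed.

Lemma continuous_Rmax_extension (g : R -> R) (s : R) :
  (forall x, s < x -> continuous g x) ->
  filterlim (fun h => g (s + h)) (at_right 0) (locally (g s)) ->
  forall x, continuous (fun y => g (Rmax s y)) x.
Proof.
  intros hc hr x. destruct (Rtotal_order x s) as [hx | [-> | hx]].
  - apply continuous_ext_loc with (fun _ => g s); [| apply continuous_const].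
    apply locally_interval with m_infty s; [exact I | exact hx |].
    intros y _ hy. simpl in hy. now rewrite Rmax_left by lra.
  - unfold continuous. rewrite (Rmax_left s s (Rle_refl s)).
    intros P hP. destruct (hr P hP) as [delta hdelta].
    exists delta. intros y hy. destruct (Rle_or_lt y s) as [hys | hys].
    + rewrite Rmax_left by exact hys. exact (locally_singleton _ _ hP).
    + rewrite Rmax_right by lra. replace y with (s + (y - s)) by ring.
      apply hdelta; [| lra]. change (Rabs (y - s - 0) < delta).
      rewrite Rminus_0_r. exact hy.
  - apply continuous_ext_loc with g; [| now apply hc].
    apply locally_interval with s p_infty; [exact hx | exact I |].
    intros y hy _. simpl in hy. now rewrite Rmax_right by lra.
Qed.

Lemma is_derive_Rmax_extension (g : R -> R) (s x l : R) :
  s < x -> is_derive g x l -> is_derive (fun y => g (Rmax s y)) x l.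
Proof.
  intros hx hd. apply is_derive_ext_loc with g; [| exact hd].
  apply locally_interval with s p_infty; [exact hx | exact I |].
  intros y hy _. simpl in hy. now rewrite Rmax_right by lra.
Qed.

Section IntegroDifferentialEquation.

Variables (s c : R) (u du : R -> R).
Hypothesis s_gt0 : 0 < s.
Hypothesis u_cont : forall x, continuous u x.
Hypothesis u_derive : forall x, s < x -> is_derive u x (du x).
Hypothesis u_eq :
  forall t, s <= t -> t * du t = - u t * (t + 1) + RInt u s t + c.

Let h (y : R) : R := - u y * (y + 1) + RInt u s y + c.

Lemma is_derive_RInt_from_s x : s <= x -> is_derive (fun b => RInt u s b) x (u x).
Proof.
  intros hx. apply (is_derive_RInt_from u 0); [| exact s_gt0 | lra].
  intros z _. apply u_cont.
Qed.

Lemma is_derive_h x : s < x -> is_derive h x (- (1 + / x) * h x).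
Proof.
  intros hx. unfold h. rewrite <- u_eq by lra.
  replace (- (1 + / x) * (x * du x)) with (- du x * (x + 1) - u x + u x)
    by (field; lra).
  auto_derive.
  - split; [now exists (du x); apply u_derive |].
    split; [apply (ex_RInt_continuous (V := R_CompleteNormedModule)); intros; apply u_cont |].
    split; [apply filter_forall; intros; apply continuity_pt_filterlim, u_cont | exact I].
  - replace (Derive (fun y => u y) x) with (du x)
      by (symmetry; now apply is_derive_unique, u_derive).
    ring.
Qed.

Lemma continuity_pt_h x : s <= x -> continuity_pt h x.
Proof.
  intros hx.
  assert (hu : continuity_pt u x) by apply continuity_pt_filterlim, u_cont.
  assert (hU : continuity_pt (fun b => RInt u s b) x).
  { apply continuity_pt_filterlim, (ex_derive_continuous (V := R_NormedModule)).
    exists (u x). now apply is_derive_RInt_from_s. }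
  unfold h. reg.
Qed.

Lemma sq_exp_derive_const t :
  s <= t -> t ^ 2 * exp t * du t = s ^ 2 * exp s * du s.
Proof.
  intros ht.
  assert (hK : t * exp t * h t = s * exp s * h s).
  { apply (is_derive_0_const (fun y => y * exp y * h y)); [exact ht | |].
    - intros x hx. apply is_derive_integrating_factor; [lra | apply is_derive_h; lra].
    - intros x hx. apply continuity_pt_filterlim.
      apply continuity_pt_mult; [apply continuity_pt_mult; [apply continuity_pt_id | reg] |].
      apply continuity_pt_h; lra. }
  unfold h in hK. rewrite <- !u_eq in hK by lra.
  transitivity (t * exp t * (t * du t)); [ring |].
  rewrite hK. ring.
Qed.

Lemma integro_differential_solution t :
  s <= t -> u t = du s * s ^ 2 * exp s * I2 t s + u s.
Proof.
  intros ht.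
  set (D := du s * s ^ 2 * exp s).
  set (f := fun xi => exp (- xi) / xi ^ 2).
  assert (f_cont : forall x, 0 < x -> continuous f x).
  { intros x hx. apply (ex_derive_continuous (V := R_NormedModule)).
    unfold f. auto_derive. nra. }
  assert (F_derive : forall x, s <= x -> is_derive (fun b => RInt f s b) x (f x)).
  { intros x hx. apply (is_derive_RInt_from f 0); [exact f_cont | exact s_gt0 | lra]. }
  assert (du_eq : forall x, s <= x -> du x = D * f x).
  { intros x hx. pose proof (sq_exp_derive_const x hx) as hx'.
    unfold D, f. rewrite exp_Ropp.
    assert (0 < exp x) by apply exp_pos.
    assert (0 < x ^ 2) by (apply pow_lt; lra).
    apply Rmult_eq_reg_l with (x ^ 2 * exp x); [| nra].
    rewrite hx'. field. lra. }
  assert (hL : u t - D * RInt f s t = u s - D * RInt f s s).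
  { apply (is_derive_0_const (fun y => u y - D * RInt f s y)); [exact ht | |].
    - intros x hx. replace 0 with (du x - D * f x) by (rewrite du_eq; lra).
      apply (is_derive_minus (V := R_NormedModule)); [apply u_derive; lra |].
      apply is_derive_scal, F_derive. lra.
    - intros x hx.
      assert (hu : continuity_pt u x) by apply continuity_pt_filterlim, u_cont.
      assert (hF : continuity_pt (fun b => RInt f s b) x).
      { apply continuity_pt_filterlim, (ex_derive_continuous (V := R_NormedModule)).
        exists (f x). apply F_derive. lra. }
      apply continuity_pt_filterlim. reg. }
  rewrite RInt_point in hL. unfold I2. fold f. fold D.
  change zero with 0 in hL. lra.
Qed.

End IntegroDifferentialEquation.

Theorem lemma3 (s c : R) (g dg : R -> R) :
  0 < s ->
  C1_on_from s g dg ->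
  (forall t, s <= t ->
     dg t = - g t * (1 + 1 / t) + (1 / t) * RInt g s t + c / t) ->
  dg s = c / s - (1 + / s) * g s /\
  (forall t, s <= t -> g t = dg s * s ^ 2 * exp s * I2 t s + g s).
Proof.
  intros hs [g_derive [g_right_derive _]] g_eq.
  split.
  { rewrite (g_eq s (Rle_refl s)), RInt_point. change zero with 0. field. lra. }
  set (ge := fun y => g (Rmax s y)).
  assert (ge_g : forall t, s <= t -> ge t = g t).
  { intros t ht. unfold ge. now rewrite Rmax_right. }
  assert (ge_cont : forall x, continuous ge x).
  { apply continuous_Rmax_extension.
    - intros x hx. apply (ex_derive_continuous (V := R_NormedModule)).
      exists (dg x). now apply g_derive.
    - exact (right_continuous_of_right_derivative g s (dg s) g_right_derive). }
  intros t ht. rewrite <- (ge_g t ht), <- (ge_g s (Rle_refl s)).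
  apply (integro_differential_solution s c); [exact hs | exact ge_cont | | | exact ht].
  - intros x hx. now apply is_derive_Rmax_extension, g_derive.
  - intros x hx. rewrite (g_eq x hx), ge_g by lra.
    rewrite (RInt_ext ge g) by (intros y; rewrite Rmin_left, Rmax_right by lra;
                                 intros hy; apply ge_g; lra).
    field. lra.
Qed.
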